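(* Let $(W,S)$ be a Coxeter group, $w\in W$, and let $s,t$ be two distinct elements of $T=\bigcup_{x\in W}xSx^{-1}$ such that $st$ has finite order $m_{s,t}$. Let $\vec a$ be a reduced expression for $w$. Then: (a) The word $\rho_{s,t}$ appears as a subword of $\operatorname{Invs}\vec a$ at most one time (i.e., in at most one set of positions). (b) The words $\rho_{s,t}$ and $\rho_{t,s}$ cannot both appear as subwords of $\operatorname{Invs}\vec a$.
   Context: $(W,S)$ is a Coxeter group. A reduced expression for $w$ is a tuple $(a_1,\ldots,a_k)\in S^k$ with $w=a_1\cdots a_k$ and $k$ minimal. $\operatorname{Invs}(a_1,\ldots,a_k)=(t_1,\ldots,t_k)$ with $t_i=(a_1\cdots a_{i-1})a_i(a_1\cdots a_{i-1})^{-1}$. For distinct $s,t\in T$ with $m_{s,t}<\infty$, $\rho_{s,t}=((st)^0s,(st)^1s,\ldots,(st)^{m_{s,t}-1}s)$. A subword of $(x_1,\ldots,x_k)$ is a word $(x_{i_1},\ldots,x_{i_p})$ with $i_1<\cdots<i_p$ (not necessarily contiguous). *)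

From HB Require Import structures.
From mathcomp Require Import all_boot.
From mathcomp Require Import monoid.

Set Implicit Arguments.
Unset Strict Implicit.
Unset Printing Implicit Defensive.

Local Open Scope group_scope.

Section Coxeter.
Variable W : groupType.

Definition wprod (l : seq W) : W := foldr (fun x y => x * y) 1 l.

Definition word_in (S : W -> Prop) (l : seq W) : Prop := forall x, x \in l -> S x.

Definition has_order (x : W) (m : nat) : Prop :=
  (0 < m)%N /\ x ^+ m = 1 /\ (forall k, (0 < k < m)%N -> x ^+ k <> 1).

(* (W,S) is a Coxeter system: S is a set of involutions generating W, and
   W has the presentation < S | s^2 = 1, (st)^{m_{s,t}} = 1 (m_{s,t} < oo) >,
   where m_{s,t} is the order of st; expressed via the universal property
   of the presentation (any assignment into a group respecting the relations
   extends to a group homomorphism). *)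
Definition coxeter_system (S : W -> Prop) : Prop :=
  [/\ forall s, S s -> s <> 1 /\ s * s = 1,
      forall w : W, exists l, word_in S l /\ wprod l = w
    & forall (H : groupType) (f : W -> H),
        (forall s, S s -> f s * f s = 1) ->
        (forall s t m, S s -> S t -> has_order (s * t) m -> (f s * f t) ^+ m = 1) ->
        exists phi : W -> H,
          (forall x y, phi (x * y) = phi x * phi y) /\ (forall s, S s -> phi s = f s)].

Definition reflection (S : W -> Prop) (t : W) : Prop :=
  exists x s, S s /\ t = x * s * x^-1.

Definition reduced_expr (S : W -> Prop) (w : W) (a : seq W) : Prop :=
  [/\ word_in S a, wprod a = w
    & forall b, word_in S b -> wprod b = w -> (size a <= size b)%N].

Definition invs (a : seq W) : seq W :=
  mkseq (fun i => wprod (take i a) * nth 1 a i * (wprod (take i a))^-1) (size a).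

Definition rho (s t : W) (m : nat) : seq W := mkseq (fun k => (s * t) ^+ k * s) m.

End Coxeter.

(** Every reflection occurs at most once in [invs a] for a reduced word [a]:
    if [t_i = t_j] with [i < j], deleting the letters [a_j] and then [a_i]
    multiplies [w] on the left by [t_i t_j = t_i^2 = 1], giving a shorter expression
    for [w].  Both claims then only use that [invs a] is duplicate free:
    positions of a subword of a duplicate-free word are determined by the
    subword, and [rho s t] lists [s] before [t] (its last letter is
    [(st)^(m-1) s = t]) while [rho t s] lists [t] before [s]. *)

From HB Require Import structures.
From mathcomp Require Import all_boot.
From mathcomp Require Import monoid.

Set Implicit Arguments.
Unset Strict Implicit.
Unset Printing Implicit Defensive.

Local Open Scope group_scope.

Section Sequences.
Variable T : eqType.

Lemma mask_uniq_inj (L : seq T) (m1 m2 : bitseq) : uniq L ->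
  size m1 = size L -> size m2 = size L -> mask m1 L = mask m2 L -> m1 = m2.
Proof.
move=> uL s1 s2 eq_mask; apply: (@eq_from_nth _ false); first by rewrite s1 s2.
move=> k; rewrite s1 => kL.
have x0 : T by case: L kL {uL s1 s2 eq_mask} => // x0.
have := congr1 (fun l => nth x0 L k \in l) eq_mask.
by rewrite /= !in_mask // mem_nth //= index_uniq.
Qed.

Lemma subseq_pair_uniq_eq (L : seq T) x y : uniq L ->
  subseq [:: x; y] L -> subseq [:: y; x] L -> x = y.
Proof.
move=> uL /(subseq_uniqP uL) exy /(subseq_uniqP uL) eyx.
have same_filter : [seq z <- L | z \in [:: x; y]] = [seq z <- L | z \in [:: y; x]].
  by apply: eq_filter => z; rewrite !inE orbC.
by move: exy; rewrite same_filter -eyx => -[].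
Qed.

End Sequences.

Section InversionSequence.
Variable W : groupType.
Implicit Types (b : seq W) (r s t x : W).

Lemma wprod_cat b1 b2 : wprod (b1 ++ b2) = wprod b1 * wprod b2.
Proof. by elim: b1 => [|x b IH] /=; rewrite ?mul1g // IH mulgA. Qed.

Definition del_nth (i : nat) b := take i b ++ drop i.+1 b.

Lemma size_del_nth i b : (i < size b)%N -> size (del_nth i b) = (size b).-1.
Proof.
move=> ib; rewrite size_cat size_take ib size_drop.
by case: (size b) ib => // n ib; rewrite subSS subnKC.
Qed.

Lemma lt_size_del_nth i j b : (i < j)%N -> (j < size b)%N -> (i < size (del_nth j b))%N.
Proof. by move=> ij jb; rewrite size_del_nth // -ltnS prednK // (leq_ltn_trans _ jb). Qed.

Lemma mem_del_nth i b : {subset del_nth i b <= b}.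
Proof. by move=> x; rewrite mem_cat => /orP[/mem_take | /mem_drop]. Qed.

Definition inv_at b i := wprod (take i b) * nth 1 b i * (wprod (take i b))^-1.

Lemma invs_inv_at b : invs b = mkseq (inv_at b) (size b).
Proof. by []. Qed.

Lemma inv_atK b i : nth 1 b i * nth 1 b i = 1 -> inv_at b i * inv_at b i = 1.
Proof.
move=> inv_i; rewrite /inv_at !mulgA mulgVK.
by rewrite -[_ * nth 1 b i * nth 1 b i]mulgA inv_i mulg1 mulgV.
Qed.

Lemma inv_at_mul_wprod b i : (i < size b)%N -> nth 1 b i * nth 1 b i = 1 ->
  inv_at b i * wprod b = wprod (del_nth i b).
Proof.
move=> ib inv_i.
have -> : wprod b = wprod (take i b) * (nth 1 b i * wprod (drop i.+1 b)).
  by rewrite -[in LHS](cat_take_drop i b) wprod_cat (drop_nth 1 ib).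
rewrite /inv_at /del_nth wprod_cat !mulgA mulgVK.
by rewrite -[_ * nth 1 b i * nth 1 b i]mulgA inv_i mulg1.
Qed.

Lemma inv_at_del_nth b i j : (i < j)%N -> (j < size b)%N ->
  inv_at (del_nth j b) i = inv_at b i.
Proof.
move=> ij jb; have ij' := ltnW ij.
by rewrite /inv_at /del_nth take_cat nth_cat size_take jb ij take_takel // nth_take.
Qed.

Lemma wprod_del_nth2 b i j :
  (forall x, x \in b -> x * x = 1) -> (i < j)%N -> (j < size b)%N ->
  inv_at b i = inv_at b j -> wprod (del_nth i (del_nth j b)) = wprod b.
Proof.
move=> inv_b ij jb eq_ij.
have invn k c : (k < size c)%N -> {subset c <= b} -> nth 1 c k * nth 1 c k = 1.
  by move=> kc cb; apply/inv_b/cb/mem_nth.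
have ib := lt_size_del_nth ij jb.
rewrite -(inv_at_mul_wprod ib (invn _ _ ib (@mem_del_nth _ _))).
rewrite inv_at_del_nth // eq_ij -(inv_at_mul_wprod jb (invn _ _ jb (fun _ => id))).
by rewrite mulgA inv_atK ?mul1g // invn.
Qed.

Lemma reduced_expr_uniq_invs (S : W -> Prop) w a :
  (forall s, S s -> s * s = 1) -> reduced_expr S w a -> uniq (invs a).
Proof.
move=> Sinv [Sa <- minimal]; rewrite invs_inv_at map_inj_in_uniq ?iota_uniq //.
have lt_neq i j : (i < j)%N -> (j < size a)%N -> inv_at a i <> inv_at a j.
  move=> ij ja eq_ij.
  have ia := ltn_trans ij ja.
  have := minimal _ (fun x xd => Sa x (mem_del_nth (mem_del_nth xd)))
    (wprod_del_nth2 (fun x xa => Sinv x (Sa x xa)) ij ja eq_ij).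
  rewrite (size_del_nth (lt_size_del_nth ij ja)) size_del_nth //.
  by case: (size a) ia => [|[|n]] //= _; rewrite ltnNge leqnSn.
move=> i j; rewrite !mem_iota !add0n /= => ia ja eq_ij.
by case: (ltngtP i j) => // [ij | ji]; [case: (lt_neq i j) | case: (lt_neq j i)].
Qed.

Lemma reflection_invol (S : W -> Prop) r :
  (forall s, S s -> s * s = 1) -> reflection S r -> r * r = 1.
Proof.
by move=> Sinv [x [q [Sq ->]]]; rewrite -!mulgA mulKg (mulgA q q) Sinv // mul1g mulgV.
Qed.

Lemma subseq_rho s t m : s * s = 1 -> t * t = 1 -> s <> t ->
  has_order (s * t) m -> subseq [:: s; t] (rho s t m).
Proof.
move=> ss tt st [m_gt0 [order_m _]].
case: m m_gt0 order_m => [|[|n]] // _ order_m.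
  by case: st; move: order_m; rewrite expg1 => /mulg1_eq <-; rewrite (mulg1_eq ss).
have -> : rho s t n.+2 = s :: [seq (s * t) ^+ k * s | k <- iota 1 n.+1].
  by rewrite /rho /mkseq /= mul1g.
apply: (@cat_subseq _ [:: s] _ [:: s]) => //; rewrite sub1seq.
apply/mapP; exists n.+1; first by rewrite mem_iota add1n ltnSn.
by rewrite -[_ * s]mulg1 -tt mulgA -(mulgA _ s t) -expgSr order_m mul1g.
Qed.

End InversionSequence.

Theorem proposition3p7 (W : groupType) (S : W -> Prop) (w s t : W) (mst mts : nat)
  (a : seq W) :
  coxeter_system S ->
  reflection S s -> reflection S t -> s <> t ->
  has_order (s * t) mst -> has_order (t * s) mts ->
  reduced_expr S w a ->
  (* (a) rho_{s,t} occurs as a subword of Invs a in at most one set of positions *)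
  (forall m1 m2 : bitseq,
      size m1 = size (invs a) -> size m2 = size (invs a) ->
      mask m1 (invs a) = rho s t mst -> mask m2 (invs a) = rho s t mst ->
      m1 = m2)
  /\
  (* (b) rho_{s,t} and rho_{t,s} are not both subwords of Invs a *)
  ~ (subseq (rho s t mst) (invs a) /\ subseq (rho t s mts) (invs a)).
Proof.
move=> [S_invol _ _] Ts Tt st order_st order_ts red_a.
have Sinv x : S x -> x * x = 1 by case/S_invol.
have uniq_invs := reduced_expr_uniq_invs Sinv red_a.
have ss := reflection_invol Sinv Ts; have tt := reflection_invol Sinv Tt.
split=> [m1 m2 s1 s2 e1 e2 | [rho_st rho_ts]].
  by apply: (mask_uniq_inj uniq_invs s1 s2); rewrite e1 e2.
apply: (st); apply: (subseq_pair_uniq_eq uniq_invs).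
- exact: subseq_trans (subseq_rho ss tt st order_st) rho_st.
- exact: subseq_trans (subseq_rho tt ss (nesym st) order_ts) rho_ts.
Qed.
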